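(* Let $\mathcal T$ be an orbital category and $\mathcal F$ a $\mathcal T$-family. The preimage of $\{\mathcal F\}$ under $c:\mathrm{wIndSys}_{\mathcal T}\to\mathrm{Fam}_{\mathcal T}$ is exactly the image of the restriction of $E^{\mathcal T}_{\mathcal F}$ to one-color $\mathcal F$-weak indexing systems.
   Context: For a small category $\mathcal T$, $\mathbb F_{\mathcal T}$ is the full subcategory of $\mathrm{Fun}(\mathcal T^{op},\mathrm{Set})$ on finite coproducts of representables; $\mathcal T$ is orbital if $\mathbb F_{\mathcal T}$ has pullbacks. $\mathbb F_V:=\mathbb F_{\mathcal T,/V}$, $*_V$ terminal; for $U\to V$, $\mathrm{Res}^V_U$ is pullback and $\mathrm{Ind}^V_U$ postcomposition. A full $\mathcal T$-subcategory $\mathcal C$ assigns isomorphism-closed classes $\mathcal C_V\subseteq\mathrm{Ob}\,\mathbb F_V$ stable under all restrictions. For $S\in\mathbb F_V$ with orbits $U\in\mathrm{Orb}(S)$ and $T_U\in\mathbb F_U$, $\coprod_U^ST_U:=\coprod_U\mathrm{Ind}_U^VT_U$. A $\mathcal T$-weak indexing system is a full $\mathcal T$-subcategory $\mathcal C$ with $\mathcal C_V\neq\emptyset\Rightarrow *_V\in\mathcal C_V$ and closed under $\coprod^S_U T_U$ for $S\in\mathcal C_V$, $T_U\in\mathcal C_U$; it has one color if all $\mathcal C_V$ are nonempty. $\mathrm{wIndSys}_{\mathcal T}$ is their poset under inclusion. A $\mathcal T$-family is a full subcategory $\mathcal F$ such that $V\to W$ with $W\in\mathcal F$ implies $V\in\mathcal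 F$; $\mathrm{Fam}_{\mathcal T}$ is their poset. A $\mathcal T$-family $\mathcal F$ is itself orbital (with $\mathbb F_{\mathcal F,/V}=\mathbb F_V$ for $V\in\mathcal F$), so $\mathcal F$-weak indexing systems are defined. $c(\mathcal C)=\{V\mid *_V\in\mathcal C_V\}$. For an $\mathcal F$-weak indexing system $\mathcal C$, $E^{\mathcal T}_{\mathcal F}\mathcal C$ is the $\mathcal T$-weak indexing system with $(E^{\mathcal T}_{\mathcal F}\mathcal C)_V=\mathcal C_V$ for $V\in\mathcal F$ and $=\emptyset$ otherwise. *)

From mathcomp Require Import ssreflect ssrfun ssrbool eqtype ssrnat seq choice fintype.
Set Implicit Arguments.
Unset Strict Implicit.
Unset Printing Implicit Defensive.

Record smallcat := MkCat {
  ob :> Type;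
  hom : ob -> ob -> Type;
  idm : forall a, hom a a;
  comp : forall {a b c}, hom b c -> hom a b -> hom a c;
  comp_idl : forall a b (f : hom a b), comp (idm b) f = f;
  comp_idr : forall a b (f : hom a b), comp f (idm a) = f;
  comp_assoc : forall a b c d (h : hom c d) (g : hom b c) (f : hom a b),
      comp h (comp g f) = comp (comp h g) f }.

Arguments hom {c} _ _ : rename.
Arguments idm {c} a : rename.
Arguments comp {c a b c0} _ _ : rename.

Section FT.
Variable T : smallcat.

(** By Yoneda, the full subcategory of presheaves on finite coproducts of
    representables is the free finite-coproduct completion of T:
    an object is a finite family (U_i)_{i in I} of objects of T
    (representing the coproduct of the representables y(U_i)), and a
    morphism  coprod_i y(U_i) -> coprod_j y(V_j)  is, for each i, a choice
    of j together with a morphism U_i -> V_j. *)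
Record fobj := FObj { fidx : finType; orb : fidx -> ob T }.
Arguments orb : clear implicits.

Definition fhom (S S' : fobj) :=
  forall i : fidx S, {j : fidx S' & hom (orb S i) (orb S' j)}.

Definition fid (S : fobj) : fhom S S := fun i => existT _ i (idm _).
Arguments fid : clear implicits.

Definition fcomp (A B D : fobj) (g : fhom B D) (f : fhom A B) : fhom A D :=
  fun i => existT _ (projT1 (g (projT1 (f i))))
                    (comp (projT2 (g (projT1 (f i)))) (projT2 (f i))).

Definition rep (V : ob T) : fobj := @FObj unit (fun _ => V).
Definition rep_map (U V : ob T) (u : hom U V) : fhom (rep U) (rep V) :=
  fun _ => existT _ tt u.

Definition fcoprod (I : finType) (X : I -> fobj) : fobj :=
  @FObj {i : I & fidx (X i)} (fun p => orb (X (projT1 p)) (projT2 p)).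

Definition is_pullback (A B D P : fobj) (f : fhom A D) (g : fhom B D)
    (p1 : fhom P A) (p2 : fhom P B) : Prop :=
  fcomp f p1 = fcomp g p2 /\
  forall (Q : fobj) (q1 : fhom Q A) (q2 : fhom Q B),
    fcomp f q1 = fcomp g q2 ->
    exists h : fhom Q P,
      (fcomp p1 h = q1 /\ fcomp p2 h = q2) /\
      forall h' : fhom Q P, fcomp p1 h' = q1 -> fcomp p2 h' = q2 -> h' = h.

Definition orbital : Prop :=
  forall (A B D : fobj) (f : fhom A D) (g : fhom B D),
    exists (P : fobj) (p1 : fhom P A) (p2 : fhom P B), is_pullback f g p1 p2.

Record sobj (V : ob T) := SObj { sdom : fobj; smap : fhom sdom (rep V) }.
Arguments smap {V} s _.
Arguments sdom {V} s.

Definition sterm (V : ob T) : sobj V := @SObj V (rep V) (fid (rep V)).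

Definition siso (V : ob T) (S S' : sobj V) : Prop :=
  exists (h : fhom (sdom S) (sdom S')) (k : fhom (sdom S') (sdom S)),
    [/\ fcomp k h = fid _, fcomp h k = fid _ & fcomp (smap S') h = smap S].

Definition sind (U V : ob T) (u : hom U V) (X : sobj U) : sobj V :=
  @SObj V (sdom X) (fcomp (rep_map u) (smap X)).

Definition scoprod (V : ob T) (I : finType) (X : I -> sobj V) : sobj V :=
  @SObj V (fcoprod (fun i => sdom (X i)))
        (fun p => smap (X (projT1 p)) (projT2 p)).

(** the orbits of S in F_V: the summands U_i of S, with their maps U_i -> V *)
Definition orbit_map (V : ob T) (S : sobj V) (i : fidx (sdom S)) :
  hom (orb (sdom S) i) V := projT2 (smap S i).

Definition scoprodS (V : ob T) (S : sobj V)
    (X : forall i : fidx (sdom S), sobj (orb (sdom S) i)) : sobj V :=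
  scoprod (fun i => sind (orbit_map i) (X i)).

Definition classes := forall V : ob T, sobj V -> Prop.

Definition iso_closed (C : classes) : Prop :=
  forall V (S S' : sobj V), siso S S' -> C V S -> C V S'.

(** stability under Res^V_U (pullback along U -> V); any choice of pullback *)
Definition res_stable (C : classes) : Prop :=
  forall (U V : ob T) (u : hom U V) (S : sobj V)
         (P : fobj) (p1 : fhom P (rep U)) (p2 : fhom P (sdom S)),
    is_pullback (rep_map u) (smap S) p1 p2 -> C V S -> C U (SObj p1).

Definition full_subcat (C : classes) : Prop := iso_closed C /\ res_stable C.

Definition is_wIndSys (C : classes) : Prop :=
  [/\ full_subcat C,
      (forall V, (exists S, C V S) -> C V (sterm V)) &
      (forall V (S : sobj V)
              (X : forall i : fidx (sdom S), sobj (orb (sdom S) i)),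
          C V S -> (forall i, C _ (X i)) -> C V (scoprodS X))].

Definition one_color (C : classes) : Prop := forall V, exists S, C V S.

Definition colors (C : classes) : ob T -> Prop := fun V => C V (sterm V).

Definition is_family (F : ob T -> Prop) : Prop :=
  forall (V W : ob T), hom V W -> F W -> F V.

End FT.

Arguments sterm {T} V.
Arguments orb {T} f _.
Arguments fid {T} S _.
Arguments smap {T V} s _.
Arguments sdom {T V} s.
Arguments SObj {T V sdom}.

Section Sub.
Variables (T : smallcat) (F : ob T -> Prop).

Definition subcat : smallcat :=
  @MkCat {V : ob T | F V} (fun a b => hom (sval a) (sval b))
       (fun a => idm (sval a)) (fun a b c g f => comp g f)
       (fun a b f => comp_idl f) (fun a b f => comp_idr f)
       (fun a b c d h g f => comp_assoc h g f).

Definition embed_fobj (S : fobj subcat) : fobj T :=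
  @FObj T (fidx S) (fun i => sval (orb S i)).

Definition embed_sobj (V : ob subcat) (S : sobj V) : sobj (sval V) :=
  @SObj T (sval V) (embed_fobj (sdom S)) (smap S).

Definition extE (C : classes subcat) : classes T :=
  fun V S => exists (hV : F V) (S' : @sobj subcat (exist F V hV)),
      @C (exist F V hV) S' /\ siso (embed_sobj S') S.

End Sub.

From mathcomp Require Import ssreflect ssrfun ssrbool eqtype ssrnat seq choice fintype.
From Stdlib Require Import FunctionalExtensionality ProofIrrelevance.
Set Implicit Arguments.
Unset Strict Implicit.

(** Since [F] is a family, every object of [F_T] admitting a map to an object
    with orbits in [F] has all its orbits in [F]; hence slices, pullbacks and
    isomorphisms over [V] in [F] are the same whether computed in [F_F] or in
    [F_T].  So [E^T_F] is a weak indexing system whose colors are exactly [F]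
    (one-colorness gives [*_V] for every [V] in [F]), and conversely a weak
    indexing system [C] with [c(C) = F] is recovered as [E^T_F] of its
    restriction to [F], since a nonempty [C_V] contains [*_V].  No pullbacks
    need to exist: restriction stability quantifies over all pullback squares. *)

Section SliceIsomorphisms.
Variable T : smallcat.

Lemma fcomp_idl (A B : fobj T) (f : fhom A B) : fcomp (fid B) f = f.
Proof.
apply: functional_extensionality_dep => i; rewrite /fcomp /fid /= comp_idl.
by case: (f i).
Qed.

Lemma fcomp_idr (A B : fobj T) (f : fhom A B) : fcomp f (fid A) = f.
Proof.
apply: functional_extensionality_dep => i; rewrite /fcomp /fid /= comp_idr.
by case: (f i).
Qed.

Lemma fcompA (A B D E : fobj T) (h : fhom D E) (g : fhom B D) (f : fhom A B) :
  fcomp h (fcomp g f) = fcomp (fcomp h g) f.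
Proof.
by apply: functional_extensionality_dep => i; rewrite /fcomp /= comp_assoc.
Qed.

Arguments fcompA {A B D E} h g f.

Lemma siso_refl (V : T) (S : sobj V) : siso S S.
Proof. by exists (fid _), (fid _); split; rewrite ?fcomp_idl ?fcomp_idr. Qed.

Lemma siso_trans (V : T) (S1 S2 S3 : sobj V) :
  siso S1 S2 -> siso S2 S3 -> siso S1 S3.
Proof.
move=> [h1 [k1 [hk1 kh1 m1]]] [h2 [k2 [hk2 kh2 m2]]].
exists (fcomp h2 h1), (fcomp k1 k2); split.
- by rewrite -fcompA (fcompA k2) hk2 fcomp_idl hk1.
- by rewrite -fcompA (fcompA h1) kh1 fcomp_idl kh2.
- by rewrite fcompA m2.
Qed.

End SliceIsomorphisms.

Section FamilySlices.
Variables (T : smallcat) (F : ob T -> Prop).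
Hypothesis HF : is_family F.

Definition lift_along (A : fobj T) (B : fobj (subcat F))
    (f : fhom A (embed_fobj B)) : fobj (subcat F) :=
  @FObj (subcat F) (fidx A) (fun i =>
    exist F (orb A i) (HF (projT2 (f i)) (proj2_sig (orb B (projT1 (f i)))))).

Definition lift_sobj (V : T) (hV : F V) (S : sobj V) :
  sobj (T := subcat F) (exist F V hV) :=
  @SObj (subcat F) (exist F V hV)
    (lift_along (B := rep (T := subcat F) (exist F V hV)) (smap S)) (smap S).

Lemma is_pullback_embed (A B D P : fobj (subcat F)) (f : fhom A D)
    (g : fhom B D) (p1 : fhom P A) (p2 : fhom P B) :
  is_pullback f g p1 p2 <->
  @is_pullback T (embed_fobj A) (embed_fobj B) (embed_fobj D) (embed_fobj P)
    f g p1 p2.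
Proof.
split=> -[sq univ]; split=> // Q q1 q2 eq.
- exact: univ (lift_along q1) q1 q2 eq.
- exact: univ (embed_fobj Q) q1 q2 eq.
Qed.

Section Extension.
Variable C' : classes (subcat F).
Hypothesis C'iso : iso_closed C'.

Lemma extE_lift (V : T) (hV : F V) (S : sobj V) :
  extE C' S -> C' (lift_sobj hV S).
Proof.
move=> [hV' [S' [CS' isoS']]].
rewrite (proof_irrelevance _ hV hV'); exact: C'iso CS'.
Qed.

Lemma lift_extE (V : T) (hV : F V) (S : sobj V) :
  C' (lift_sobj hV S) -> extE C' S.
Proof.
by move=> CS; exists hV, (lift_sobj hV S); split; last exact: siso_refl.
Qed.

Hypotheses (C'term : forall V, (exists S, @C' V S) -> C' (sterm V))
           (C'one : one_color C').

Lemma colors_extE (V : T) : colors (extE C') V <-> F V.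
Proof.
split=> [[] // | hV]; exists hV, (sterm (exist F V hV : subcat F)).
split; [apply: C'term; exact: C'one | exact: siso_refl].
Qed.

End Extension.

Lemma extE_wIndSys (C' : classes (subcat F)) :
  is_wIndSys C' -> one_color C' -> is_wIndSys (extE C').
Proof.
move=> [[C'iso C'res] C'term C'cop] C'one; split; first split.
- move=> V S1 S2 iso12 [hV [S' [CS' iso1]]].
  by exists hV, S'; split; last exact: siso_trans iso1 iso12.
- move=> U V u S P p1 p2 pb ES; have [hV _] := ES.
  have hU := HF u hV.
  apply: (lift_extE (hV := hU)).
  apply: (C'res (exist F U hU) (exist F V hV) u (lift_sobj hV S)
            (lift_along (B := rep (T := subcat F) (exist F U hU)) p1) p1 p2).
    by apply/is_pullback_embed.
  exact: extE_lift.
- by move=> V [S [hV _]]; apply/colors_extE.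
- move=> V S X ES EX; have [hV _] := ES.
  pose lX i := lift_sobj (HF (orbit_map i) hV) (X i).
  exists hV, (scoprodS (S := lift_sobj hV S) lX); split; last exact: siso_refl.
  by apply: C'cop => [|i]; apply: extE_lift.
Qed.

Section Restriction.
Variable C : classes T.

Definition restrictF : classes (subcat F) :=
  fun W S => @C (sval W) (embed_sobj S).

Hypothesis wC : is_wIndSys C.

Lemma restrictF_wIndSys : is_wIndSys restrictF.
Proof.
case: wC => -[Ciso Cres] Cterm Ccop; split; first split.
- by move=> W S1 S2 iso12; apply: Ciso.
- move=> U V u S P p1 p2 pb.
  apply: (Cres (sval U) (sval V) u (embed_sobj S) (embed_fobj P) p1 p2).
  exact: (iffLR (is_pullback_embed _ _ _ _) pb).
- by move=> W [S CS]; apply: Cterm; exists (embed_sobj S).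
- move=> W S X CS CX.
  exact: (Ccop (sval W) (embed_sobj S) (fun i => embed_sobj (X i)) CS CX).
Qed.

Hypothesis colorsC : forall V, colors C V <-> F V.

Lemma restrictF_one_color : one_color restrictF.
Proof. by move=> W; exists (sterm W); apply/colorsC/(proj2_sig W). Qed.

Lemma extE_restrictF (V : T) (S : sobj V) : @C V S <-> extE restrictF S.
Proof.
case: wC => -[Ciso _] Cterm _; split=> [CS | [hV [S' [CS' isoS']]]].
- have hV : F V by apply/colorsC/Cterm; exists S.
  by exists hV, (lift_sobj hV S); split; [apply: Ciso CS | ]; apply: siso_refl.
- exact: Ciso isoS' CS'.
Qed.

End Restriction.

End FamilySlices.

Theorem mainTheorem8 (T : smallcat) (HT : orbital T) (F : ob T -> Prop)
    (HF : is_family F) :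
  (* E^T_F sends one-color F-weak indexing systems to T-weak indexing systems *)
  (forall C' : classes (subcat F),
      is_wIndSys C' -> one_color C' -> is_wIndSys (extE C')) /\
  (* preimage of {F} under c  =  image of E^T_F on one-color systems *)
  (forall C : classes T, is_wIndSys C ->
     ((forall V, colors C V <-> F V) <->
      exists C' : classes (subcat F),
        [/\ is_wIndSys C', one_color C' &
            forall V (S : sobj V), C V S <-> extE C' S])).
Proof.
split; first exact: extE_wIndSys.
move=> C wC; split=> [colorsC | [C' [wC' oneC' CE]] V].
- exists (restrictF (F := F) C); split.
  + exact: restrictF_wIndSys.
  + exact: restrictF_one_color.
  + exact: extE_restrictF.
- case: wC' => _ C'term _.
  exact: iff_trans (CE V (sterm V)) (colors_extE C'term oneC' V).
Qed.
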